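(* Let $M$ be a proper metric space and $X_1,\dots,X_n\subseteq M$ Borel subsets. Then the sets $A_0=X_1\cap\dots\cap X_n$ and $A_i=X_i^c\cap X_{i+1}\cap\dots\cap X_n$ ($i=1,\dots,n$) form a partition of $M$. Moreover, if $X_1,\dots,X_n$ is a coarsely transverse collection of half spaces, then $A_0,\dots,A_n$ is a coarsely transverse $n$-partition.
   Context: For $Y\subseteq M$, $Y_R=\{x:d(x,Y)\le R\}$. Coarsely transverse half spaces: Borel sets $X_1,\dots,X_n$ with $\bigcap_i (X_i)_R\cap (X_i^c)_R$ bounded for every $R\ge0$. A coarsely transverse $n$-partition: pairwise disjoint Borel sets $A_0,\dots,A_n$ with union $M$ such that $(A_0)_R\cap\dots\cap(A_n)_R$ is bounded for every $R\ge 0$. *)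

From HB Require Import structures.
From mathcomp Require Import all_boot all_order all_algebra.
From mathcomp Require Import all_classical all_reals all_analysis.
Set Implicit Arguments. Unset Strict Implicit. Unset Printing Implicit Defensive.
Import Order.TTheory GRing.Theory Num.Theory.
Local Open Scope classical_set_scope.
Local Open Scope ring_scope.

Section defs.
Context {R : realType} {M : metricType R}.

(* d(x,Y) = inf_{y in Y} d(x,y), as an extended real (+oo when Y is empty). *)
Definition set_dist (x : M) (Y : set M) : \bar R :=
  ereal_inf [set (mdist x y)%:E | y in Y].

Definition nbhdR (Y : set M) (r : R) : set M :=
  [set x | (set_dist x Y <= r%:E)%E].

Definition mbounded (A : set M) : Prop :=
  exists r : R, forall x y, A x -> A y -> mdist x y <= r.

Definition proper_metric : Prop :=
  forall (x : M) (r : R), compact [set y | mdist x y <= r].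

Definition Borel (A : set M) : Prop := <<s [set U : set M | open U] >> A.

Definition coarsely_transverse_half_spaces (n : nat) (X : nat -> set M) : Prop :=
  (forall i, (1 <= i <= n)%N -> Borel (X i)) /\
  forall r : R, 0 <= r ->
    mbounded (\bigcap_(i in [set i | (1 <= i <= n)%N])
                 (nbhdR (X i) r `&` nbhdR (~` X i) r)).

Definition coarsely_transverse_partition (n : nat) (A : nat -> set M) : Prop :=
  (forall i, (i <= n)%N -> Borel (A i)) /\
  (forall i j, (i <= n)%N -> (j <= n)%N -> i <> j -> A i `&` A j = set0) /\
  (\bigcup_(i in [set i | (i <= n)%N]) A i = setT) /\
  forall r : R, 0 <= r ->
    mbounded (\bigcap_(i in [set i | (i <= n)%N]) nbhdR (A i) r).

Definition half_space_partition (n : nat) (X : nat -> set M) (i : nat) : set M :=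
  if i == 0%N then \bigcap_(j in [set j | (1 <= j <= n)%N]) X j
  else ~` X i `&` \bigcap_(j in [set j | (i < j <= n)%N]) X j.

End defs.

From HB Require Import structures.
From mathcomp Require Import all_boot all_order all_algebra.
From mathcomp Require Import all_classical all_reals all_analysis.
Import Order.TTheory GRing.Theory Num.Theory.
Local Open Scope classical_set_scope.
Local Open Scope ring_scope.

(* A point lies in A_i exactly when i is the last index with x \notin X_i
   (and in A_0 when there is none), which gives the partition.  A point
   R-close to every A_i is R-close to A_0, contained in X_i, and to A_i,
   contained in X_i^c, so the intersection of the R-neighbourhoods of the
   A_i lies in the bounded set of the transversality of the X_i. *)

Section Borel_sets.
Context {R : realType} {M : metricType R}.
Implicit Types (A B : set M) (F : nat -> set M) (P : set nat).

Lemma BorelC A : Borel A -> Borel (~` A).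
Proof. by move=> BA; rewrite -setTD; exact: sigma_algebraCD. Qed.

Lemma Borel_bigcup F P :
  (forall k, P k -> Borel (F k)) -> Borel (\bigcup_(i in P) F i).
Proof.
move=> BF; rewrite bigcup_mkcond; apply: sigma_algebra_bigcup => k.
by case: ifPn => [/[!inE]/BF //|_]; exact: sigma_algebra0.
Qed.

Lemma Borel_bigcap F P :
  (forall k, P k -> Borel (F k)) -> Borel (\bigcap_(i in P) F i).
Proof.
move=> BF; rewrite -[X in Borel X]setCK setC_bigcap.
apply: BorelC; apply: Borel_bigcup => k /BF; exact: BorelC.
Qed.

Lemma BorelI A B : Borel A -> Borel B -> Borel (A `&` B).
Proof.
move=> BA BB; rewrite -bigcap2E; apply: Borel_bigcap => -[|[|k]] _ //=.
by rewrite -setC0; apply: BorelC; exact: sigma_algebra0.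
Qed.

End Borel_sets.

Section neighbourhoods.
Context {R : realType} {M : metricType R}.
Implicit Types A B : set M.

Lemma nbhdRS A B (r : R) : A `<=` B -> nbhdR A r `<=` nbhdR B r.
Proof.
move=> AB x Ax; apply: le_trans Ax.
by apply: ereal_inf_le_tmp; exact: image_subset.
Qed.

Lemma mboundedS A B : A `<=` B -> mbounded B -> mbounded A.
Proof. by move=> AB [r Br]; exists r => x y /AB Bx /AB By; exact: Br. Qed.

End neighbourhoods.

Section half_space_partition.
Context {R : realType} {M : metricType R}.
Variables (n : nat) (X : nat -> set M).
Local Notation A := (half_space_partition n X).

Lemma half_space_partition_subX i j : (i < j <= n)%N -> A i `<=` X j.
Proof.
move=> /andP[ij jn] x; rewrite /half_space_partition.
case: eqP => [i0 Ax|_ [_ Ax]]; apply: Ax => /=; last by rewrite ij jn.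
by rewrite -i0 jn andbT.
Qed.

Lemma half_space_partition_subC i : (0 < i)%N -> A i `<=` ~` X i.
Proof. by move=> i_gt0 x; rewrite /half_space_partition gtn_eqF // => -[]. Qed.

Lemma Borel_half_space_partition i :
  (forall j, (1 <= j <= n)%N -> Borel (X j)) -> (i <= n)%N -> Borel (A i).
Proof.
move=> BX i_le_n; rewrite /half_space_partition; case: eqP => [_|/eqP i_neq0].
  by apply: Borel_bigcap => j /BX.
apply: BorelI; first by apply: BorelC; apply: BX; rewrite i_le_n andbT lt0n.
apply: Borel_bigcap => j /andP[ij jn]; apply: BX.
by rewrite jn andbT; exact: leq_ltn_trans ij.
Qed.

Lemma half_space_partition_disjoint_lt i j : (i < j <= n)%N ->
  A i `&` A j = set0.
Proof.
move=> ijn; apply/disjoints_subset => x Aix Ajx.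
have j_gt0 : (0 < j)%N by case/andP: ijn => /(leq_ltn_trans (leq0n i)).
exact: half_space_partition_subC _ j_gt0 x Ajx (half_space_partition_subX _ _ ijn x Aix).
Qed.

Lemma half_space_partition_disjoint i j : (i <= n)%N -> (j <= n)%N -> i <> j ->
  A i `&` A j = set0.
Proof.
move=> i_le_n j_le_n; case: (ltngtP i j) => [ij|ji|->] // _.
  by apply: half_space_partition_disjoint_lt; rewrite ij.
by rewrite setIC; apply: half_space_partition_disjoint_lt; rewrite ji.
Qed.

Lemma half_space_partition_cover_upto (x : M) k : (k <= n)%N ->
  (forall j, (k < j <= n)%N -> X j x) -> exists2 i, (i <= k)%N & A i x.
Proof.
elim: k => [|k IHk] kn Xx.
  by exists 0%N => //; rewrite /half_space_partition eqxx.
have [Xkx|nXkx] := pselect (X k.+1 x); last first.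
  by exists k.+1 => //; rewrite /half_space_partition.
have [i ik Aix] : exists2 i, (i <= k)%N & A i x.
  apply: IHk => [|j /andP[kj jn]]; first exact: ltnW.
  have [-> //|jk] := eqVneq j k.+1.
  by apply: Xx; rewrite ltn_neqAle eq_sym jk kj jn.
by exists i => //; exact: leqW.
Qed.

Lemma half_space_partition_cover :
  \bigcup_(i in [set i | (i <= n)%N]) A i = setT.
Proof.
apply/seteqP; split => // x _.
have [j /andP[nj jn]|i i_le_n Aix] :=
    half_space_partition_cover_upto x n (leqnn n).
  by rewrite ltnNge jn in nj.
by exists i.
Qed.

Lemma bigcap_nbhdR_half_space_partition (r : R) :
  \bigcap_(i in [set i | (i <= n)%N]) nbhdR (A i) r `<=`
  \bigcap_(i in [set i | (1 <= i <= n)%N]) (nbhdR (X i) r `&` nbhdR (~` X i) r).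
Proof.
move=> x near_A i /andP[i_gt0 i_le_n]; split.
- by apply: nbhdRS (near_A 0%N isT); apply: half_space_partition_subX; rewrite i_gt0.
- by apply: nbhdRS (near_A i i_le_n); exact: half_space_partition_subC.
Qed.

Lemma coarsely_transverse_half_space_partition :
  coarsely_transverse_half_spaces n X ->
  coarsely_transverse_partition n A.
Proof.
move=> [BX bounded_X]; split; first by move=> i; exact: Borel_half_space_partition.
split; first exact: half_space_partition_disjoint.
split; first exact: half_space_partition_cover.
move=> r r_ge0.
exact: mboundedS (bigcap_nbhdR_half_space_partition r) (bounded_X r r_ge0).
Qed.

End half_space_partition.

Theorem lemma5p5 (R : realType) (M : metricType R) (n : nat) (X : nat -> set M) :
  proper_metric (M := M) ->
  (forall i, (1 <= i <= n)%N -> Borel (X i)) ->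
  ((forall i, (i <= n)%N -> Borel (half_space_partition n X i)) /\
   (forall i j, (i <= n)%N -> (j <= n)%N -> i <> j ->
      half_space_partition n X i `&` half_space_partition n X j = set0) /\
   (\bigcup_(i in [set i | (i <= n)%N]) half_space_partition n X i = setT)) /\
  (coarsely_transverse_half_spaces n X ->
   coarsely_transverse_partition n (half_space_partition n X)).
Proof.
move=> _ BX; split; last exact: coarsely_transverse_half_space_partition.
split; first by move=> i; exact: Borel_half_space_partition.
split; [exact: half_space_partition_disjoint | exact: half_space_partition_cover].
Qed.
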